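(* For every well-typed CorePolyC program $p$ there is a polynomial $q$ such that $\mathrm{sz}([\![p]\!](\tilde v))\le q(\mathrm{sz}(\tilde v))$ for every input tuple $\tilde v$.
   Context: CorePolyC. Types are $\mathtt{iint},\mathtt{int},\mathtt{bool}$; $\mathsf{Int}=\{\mathtt{iint},\mathtt{int}\}$, ordered by $\mathtt{iint}\preccurlyeq\mathtt{int}$. Values are unbounded integers ($\mathbb Z$) and booleans $\#t,\#f$. Expressions: variables $x$; constants (nonempty decimal digit strings denoting natural numbers; $\mathtt{true}$, $\mathtt{false}$); operator applications $\mathtt{op}(e_1,\dots,e_m)$; parenthesized $(e)$. Operators and semantics: unary $-$ (negation); binary $+,-,/,\%$ (integer addition, subtraction, division, remainder, with division and remainder by $0$ returning $0$); $\mathtt{size}$, with $\mathtt{size}(v)=\lceil\log_2(\mathrm{abs}(v)+1)\rceil$; comparisons $\texttt{>=},\texttt{<=},\texttt{>},\texttt{<},\texttt{==},\texttt{!=}$ on integers returning booleans; boolean $\texttt{!},\texttt{\&\&},\texttt{||}$. Statements: declaration $t\ x;$; assignment $x=e;$; block $\{s_1\dots s_m\}$; conditional $\mathbf{if}(e)\ s_1\ \mathbf{else}\ s_2$; loop $\mathbf{for}(x<\mathtt{size}(e))\ s$ (loop bounds are always syntactically of the form $\mathtt{size}(e)$). A program is $\mathbf{int\ main}(\mathbf{int}\ x_1,\dots,\mathbf{int}\ x_m)\{s_1\dots s_k\ \mathbf{return}\ e;\}$. Semantics (big-step). A store $\Sigma$ is a finite partial map from variables to values; $\Sigma[x\mapsto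 v]$ is the update. $\Sigma\vdash e\Downarrow v$: a variable $x\in\mathrm{dom}\,\Sigma$ evaluates to $\Sigma(x)$, constants to their value, $\mathtt{op}(e_1,\dots,e_m)$ to $\mathtt{op}$ applied to the values of the $e_i$. $\Sigma\vdash s\Downarrow\Sigma'$: $t\ x;$ gives $\Sigma[x\mapsto 0]$ if $t\in\mathsf{Int}$ and $\Sigma[x\mapsto\#f]$ if $t=\mathtt{bool}$; $x=e;$ (with $x\in\mathrm{dom}\,\Sigma$) gives $\Sigma[x\mapsto v]$ where $\Sigma\vdash e\Downarrow v$; a sequence or block executes its statements in order threading the store (a block returns the final store); a conditional evaluates its guard to a boolean and executes the corresponding branch; $\mathbf{for}(x<e)\ s$ evaluates $e$ once to an integer $i$, sets $\Sigma_0=\Sigma$, executes $s$ from $\Sigma_j[x\mapsto j]$ obtaining $\Sigma_{j+1}$ for $j=0,\dots,i-1$, and ends in $\Sigma_i$ (i.e. in $\Sigma$ if $i\le 0$). A program on inputs $v_1,\dots,v_m$ runs its statements from the store $[x_1\mapsto v_1,\dots,x_m\mapsto v_m]$ and outputs the value of its return expression in the resulting store. Type system. A typing environment $\Gamma$ is a finite partial map from variables to types; $\ell\in\{\#t,\#f\}$ is the loop indicator. Expression typing $\Gamma,\ell\vdash e:t$: a variable $x\in\mathrm{dom}\,\Gamma$ has type $\Gamma(x)$; digit literals have type $\mathtt{iint}$, $\mathtt{true},\mathtt{false}$ have type $\mathtt{bool}$; $\texttt{!},\texttt{\&\&},\texttt{||}$ take $\mathtt{bool}$ arguments to $\mathtt{bool}$;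 comparisons take arguments with types in $\mathsf{Int}$ to $\mathtt{bool}$; $+,-,/,\%$ take arguments with types in $\mathsf{Int}$ to their supremum under $\preccurlyeq$ ($\mathtt{iint}$ iff all arguments are $\mathtt{iint}$); $\mathtt{size}$ takes only an $\mathtt{iint}$ argument, giving $\mathtt{iint}$; parentheses preserve types. Statement typing $\Gamma,\ell\vdash s:\Gamma'$: $t\ x;$ is typable iff $x\notin\mathrm{dom}\,\Gamma$ and not($\ell=\#t$ and $t=\mathtt{iint}$), giving $\Gamma[x\mapsto t]$; $x=e;$ is typable iff $x\in\mathrm{dom}\,\Gamma$, not($\ell=\#t$ and $\Gamma(x)=\mathtt{iint}$), and $\Gamma,\ell\vdash e:t$ with $t,\Gamma(x)$ both in $\mathsf{Int}$ or both $\mathtt{bool}$, giving $\Gamma$; a sequence $s_1\dots s_m$ threads $\Gamma_0=\Gamma$, $\Gamma_{i-1},\ell\vdash s_i:\Gamma_i$, giving $\Gamma_m$; a block $\{\tilde s\}$ is typable if its sequence is, giving $\Gamma$; a conditional needs a guard of type $\mathtt{bool}$ and both branches typable under $\Gamma,\ell$, giving $\Gamma$; $\mathbf{for}(x<e)\ s$ needs $\Gamma,\ell\vdash e:\mathtt{iint}$, $x\notin\mathrm{dom}\,\Gamma$, and $\Gamma[x\mapsto\mathtt{iint}],\#t\vdash s:\Gamma'$ for some $\Gamma'$, giving $\Gamma$. A program is well-typed if its statements are typable starting from $[x_1\mapsto\mathtt{int},\dots,x_m\mapsto\mathtt{int}]$ with $\ell=\#f$, ending in some $\Gamma'$, and its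 return expression has a type in $\mathsf{Int}$ under $\Gamma',\#f$. A well-typed program $p$ with $m$ inputs computes a total function $[\![p]\!]:\mathbb Z^m\to\mathbb Z$. Sizes: $\mathrm{sz}(v)=\lceil\log_2(\mathrm{abs}(v)+1)\rceil$ for $v\in\mathbb Z$, and $\mathrm{sz}(v_1,\dots,v_m)=\sum_i\mathrm{sz}(v_i)$. *)

From Stdlib Require Import ZArith List Bool.
Import ListNotations.
Open Scope Z_scope.

Definition var := nat.

Inductive typ := TIint | TInt | TBool.

Definition is_Int (t : typ) : bool :=
  match t with TIint | TInt => true | TBool => false end.

(* supremum w.r.t. iint <= int (only used on Int types) *)
Definition sup (t1 t2 : typ) : typ :=
  match t1, t2 with TIint, TIint => TIint | _, _ => TInt end.

Inductive unop := UNeg | USize | UNot.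
Inductive binop :=
  | BAdd | BSub | BDiv | BMod
  | BGe | BLe | BGt | BLt | BEq | BNe
  | BAnd | BOr.

Inductive expr :=
  | EVar (x : var)
  | ENum (n : nat)          (* nonempty decimal digit string, denoting n *)
  | ETrue | EFalse
  | EUn (o : unop) (e : expr)
  | EBin (o : binop) (e1 e2 : expr)
  | EParen (e : expr).

(* [SFor x e s] is the loop  for(x < size(e)) s  (loop bounds are always
   syntactically of the form size(e)). *)
Inductive stmt :=
  | SDecl (t : typ) (x : var)
  | SAssign (x : var) (e : expr)
  | SBlock (ss : list stmt)
  | SIf (e : expr) (s1 s2 : stmt)
  | SFor (x : var) (e : expr) (s : stmt).

Record program := Program {
  params : list var;
  body : list stmt;
  ret : expr }.

Inductive val := VInt (z : Z) | VBool (b : bool).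

Definition sz (v : Z) : Z := Z.log2_up (Z.abs v + 1).
Definition sz_tuple (vs : list Z) : Z := fold_right (fun v acc => sz v + acc) 0 vs.

Definition store := var -> option val.
Definition upd {A} (m : var -> option A) (x : var) (a : A) : var -> option A :=
  fun y => if Nat.eqb y x then Some a else m y.
Definition empty {A} : var -> option A := fun _ => None.

Definition zdiv (a b : Z) : Z := if b =? 0 then 0 else Z.quot a b.
Definition zmod (a b : Z) : Z := if b =? 0 then 0 else Z.rem a b.

Definition unop_sem (o : unop) (v : val) : option val :=
  match o, v with
  | UNeg, VInt z => Some (VInt (- z))
  | USize, VInt z => Some (VInt (sz z))
  | UNot, VBool b => Some (VBool (negb b))
  | _, _ => None
  end.

Definition binop_sem (o : binop) (v1 v2 : val) : option val :=
  match o, v1, v2 with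
  | BAdd, VInt a, VInt b => Some (VInt (a + b))
  | BSub, VInt a, VInt b => Some (VInt (a - b))
  | BDiv, VInt a, VInt b => Some (VInt (zdiv a b))
  | BMod, VInt a, VInt b => Some (VInt (zmod a b))
  | BGe, VInt a, VInt b => Some (VBool (b <=? a))
  | BLe, VInt a, VInt b => Some (VBool (a <=? b))
  | BGt, VInt a, VInt b => Some (VBool (b <? a))
  | BLt, VInt a, VInt b => Some (VBool (a <? b))
  | BEq, VInt a, VInt b => Some (VBool (a =? b))
  | BNe, VInt a, VInt b => Some (VBool (negb (a =? b)))
  | BAnd, VBool a, VBool b => Some (VBool (a && b))
  | BOr, VBool a, VBool b => Some (VBool (a || b))
  | _, _, _ => None
  end.

(* Sigma |- e ⇓ v  (as a partial function; deterministic by construction) *)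
Fixpoint eval (S : store) (e : expr) : option val :=
  match e with
  | EVar x => S x
  | ENum n => Some (VInt (Z.of_nat n))
  | ETrue => Some (VBool true)
  | EFalse => Some (VBool false)
  | EUn o e1 =>
      match eval S e1 with Some v => unop_sem o v | None => None end
  | EBin o e1 e2 =>
      match eval S e1, eval S e2 with
      | Some v1, Some v2 => binop_sem o v1 v2
      | _, _ => None
      end
  | EParen e1 => eval S e1
  end.

Inductive exec : store -> stmt -> store -> Prop :=
  | ExDecl : forall S t x,
      exec S (SDecl t x) (upd S x (if is_Int t then VInt 0 else VBool false))
  | ExAssign : forall S x e v,
      S x <> None -> eval S e = Some v -> exec S (SAssign x e) (upd S x v)
  | ExBlock : forall S ss S', exec_seq S ss S' -> exec S (SBlock ss) S'
  | ExIfT : forall S e s1 s2 S',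
      eval S e = Some (VBool true) -> exec S s1 S' -> exec S (SIf e s1 s2) S'
  | ExIfF : forall S e s1 s2 S',
      eval S e = Some (VBool false) -> exec S s2 S' -> exec S (SIf e s1 s2) S'
  | ExFor : forall S x e s i S',
      eval S (EUn USize e) = Some (VInt i) ->
      exec_loop x s 0 (Z.to_nat i) S S' ->
      exec S (SFor x e s) S'
with exec_seq : store -> list stmt -> store -> Prop :=
  | ExNil : forall S, exec_seq S [] S
  | ExCons : forall S s ss S1 S2,
      exec S s S1 -> exec_seq S1 ss S2 -> exec_seq S (s :: ss) S2
(* exec_loop x s j n Sigma_j Sigma_n: iterations j, ..., n-1 *)
with exec_loop : var -> stmt -> nat -> nat -> store -> store -> Prop :=
  | ExLoopDone : forall x s j n S, (n <= j)%nat -> exec_loop x s j n S S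
  | ExLoopStep : forall x s j n S S1 S2,
      (j < n)%nat ->
      exec (upd S x (VInt (Z.of_nat j))) s S1 ->
      exec_loop x s (Datatypes.S j) n S1 S2 ->
      exec_loop x s j n S S2.

Fixpoint init_store (xs : list var) (vs : list Z) : store :=
  match xs, vs with
  | x :: xs', v :: vs' => upd (init_store xs' vs') x (VInt v)
  | _, _ => empty
  end.

Definition runs (p : program) (vs : list Z) (z : Z) : Prop :=
  length vs = length (params p) /\
  exists S', exec_seq (init_store (params p) vs) (body p) S' /\
             eval S' (ret p) = Some (VInt z).

Definition tenv := var -> option typ.

Inductive has_type (G : tenv) (l : bool) : expr -> typ -> Prop :=
  | TyVar : forall x t, G x = Some t -> has_type G l (EVar x) t
  | TyNum : forall n, has_type G l (ENum n) TIint
  | TyTrue : has_type G l ETrue TBool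
  | TyFalse : has_type G l EFalse TBool
  | TyNot : forall e, has_type G l e TBool -> has_type G l (EUn UNot e) TBool
  | TyNeg : forall e t, has_type G l e t -> is_Int t = true ->
      has_type G l (EUn UNeg e) t
  | TySize : forall e, has_type G l e TIint -> has_type G l (EUn USize e) TIint
  | TyBool2 : forall o e1 e2, In o [BAnd; BOr] ->
      has_type G l e1 TBool -> has_type G l e2 TBool ->
      has_type G l (EBin o e1 e2) TBool
  | TyCmp : forall o e1 e2 t1 t2, In o [BGe; BLe; BGt; BLt; BEq; BNe] ->
      has_type G l e1 t1 -> has_type G l e2 t2 ->
      is_Int t1 = true -> is_Int t2 = true ->
      has_type G l (EBin o e1 e2) TBool
  | TyArith : forall o e1 e2 t1 t2, In o [BAdd; BSub; BDiv; BMod] ->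
      has_type G l e1 t1 -> has_type G l e2 t2 ->
      is_Int t1 = true -> is_Int t2 = true ->
      has_type G l (EBin o e1 e2) (sup t1 t2)
  | TyParen : forall e t, has_type G l e t -> has_type G l (EParen e) t.

Definition compatible (t1 t2 : typ) : Prop :=
  (is_Int t1 = true /\ is_Int t2 = true) \/ (t1 = TBool /\ t2 = TBool).

Inductive stmt_type : tenv -> bool -> stmt -> tenv -> Prop :=
  | StDecl : forall G l t x,
      G x = None -> ~ (l = true /\ t = TIint) ->
      stmt_type G l (SDecl t x) (upd G x t)
  | StAssign : forall G l x e tx te,
      G x = Some tx -> ~ (l = true /\ tx = TIint) ->
      has_type G l e te -> compatible te tx ->
      stmt_type G l (SAssign x e) G
  | StBlock : forall G l ss G', seq_type G l ss G' -> stmt_type G l (SBlock ss) G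
  | StIf : forall G l e s1 s2 G1 G2,
      has_type G l e TBool -> stmt_type G l s1 G1 -> stmt_type G l s2 G2 ->
      stmt_type G l (SIf e s1 s2) G
  | StFor : forall G l x e s G',
      has_type G l (EUn USize e) TIint -> G x = None ->
      stmt_type (upd G x TIint) true s G' ->
      stmt_type G l (SFor x e s) G
with seq_type : tenv -> bool -> list stmt -> tenv -> Prop :=
  | SqNil : forall G l, seq_type G l [] G
  | SqCons : forall G l s ss G1 G2,
      stmt_type G l s G1 -> seq_type G1 l ss G2 -> seq_type G l (s :: ss) G2.

Fixpoint init_tenv (xs : list var) : tenv :=
  match xs with
  | [] => empty
  | x :: xs' => upd (init_tenv xs') x TInt
  end.

Definition well_typed (p : program) : Prop :=
  exists G' t, seq_type (init_tenv (params p)) false (body p) G' /\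
               has_type G' false (ret p) t /\ is_Int t = true.

(* polynomials with integer coefficients, c0 + c1 x + ... *)
Definition peval (cs : list Z) (x : Z) : Z :=
  fold_right (fun c acc => c + x * acc) 0 cs.

From Stdlib Require Import ZArith List Lia.
Import ListNotations.
Open Scope Z_scope.

(* Track a log-bound [b] with every integer in the store of absolute value at
   most [2 ^ b].  An expression [e] then evaluates to at most
   [expr_weight e * 2 ^ b <= 2 ^ (b + expr_weight e)], so an assignment raises
   [b] additively.  A loop [for (x < size(e))] runs at most
   [c + expr_weight e + 1] times, where [2 ^ c] bounds the [iint] variables;
   since typing makes [iint] variables read-only inside loop bodies, [c] is
   constant during the loop and each iteration raises [b] by an amount that
   depends only on [c].  Hence the final log-bound is a polynomial in the
   initial one, [sz_tuple vs], and [sz z] exceeds the log-bound of [z] by at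
   most one. *)

Lemma abs_quot_le a b : b <> 0 -> Z.abs (Z.quot a b) <= Z.abs a.
Proof.
  intros Hb. rewrite <- Z.quot_abs, Z.quot_div_nonneg by lia.
  apply Z.div_le_upper_bound; nia.
Qed.

Lemma abs_rem_le a b : b <> 0 -> Z.abs (Z.rem a b) <= Z.abs a.
Proof. intros Hb. rewrite <- Z.rem_abs by lia. apply Z.rem_le; lia. Qed.

Lemma mul_pow2_le k b : 0 <= k -> 0 <= b -> k * 2 ^ b <= 2 ^ (b + k).
Proof.
  intros Hk Hb. rewrite Z.pow_add_r by lia.
  pose proof (Z.pow_gt_lin_r 2 k ltac:(lia) Hk).
  pose proof (Z.pow_pos_nonneg 2 b ltac:(lia) Hb). nia.
Qed.

Lemma sz_nonneg z : 0 <= sz z.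
Proof. apply Z.log2_up_nonneg. Qed.

Lemma sz_le_abs z : sz z <= Z.abs z.
Proof.
  apply Z.log2_up_le_pow2; [lia|].
  pose proof (Z.pow_gt_lin_r 2 (Z.abs z) ltac:(lia) (Z.abs_nonneg z)). lia.
Qed.

Lemma abs_le_pow2_sz z : Z.abs z <= 2 ^ sz z.
Proof. pose proof (Z.log2_log2_up_spec (Z.abs z + 1) ltac:(lia)). unfold sz. lia. Qed.

Lemma sz_le_of_abs_le_pow2 z b : 0 <= b -> Z.abs z <= 2 ^ b -> sz z <= b + 1.
Proof.
  intros Hb Hz. apply Z.log2_up_le_pow2; [lia|].
  rewrite Z.pow_add_r, Z.pow_1_r by lia.
  pose proof (Z.pow_pos_nonneg 2 b ltac:(lia) Hb). lia.
Qed.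

Lemma sz_tuple_nonneg vs : 0 <= sz_tuple vs.
Proof.
  unfold sz_tuple. induction vs as [|v vs IH]; cbn [fold_right]; [lia|].
  pose proof (sz_nonneg v). lia.
Qed.

Lemma unop_sem_abs_le o v z : unop_sem o v = Some (VInt z) ->
  exists a, v = VInt a /\ Z.abs z <= Z.abs a.
Proof.
  destruct o, v as [a|]; intros H; inversion H; subst; exists a; split; auto.
  - lia.
  - pose proof (sz_le_abs a). pose proof (sz_nonneg a). lia.
Qed.

Lemma binop_sem_abs_le o v1 v2 z : binop_sem o v1 v2 = Some (VInt z) ->
  exists a b, v1 = VInt a /\ v2 = VInt b /\ Z.abs z <= Z.abs a + Z.abs b.
Proof.
  destruct o, v1 as [a|], v2 as [c|]; intros H; inversion H; subst;
    exists a, c; repeat split; try lia.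
  - unfold zdiv. destruct (Z.eqb_spec c 0); [cbn; lia|].
    pose proof (abs_quot_le a c). lia.
  - unfold zmod. destruct (Z.eqb_spec c 0); [cbn; lia|].
    pose proof (abs_rem_le a c). lia.
Qed.

Fixpoint expr_weight (e : expr) : Z :=
  match e with
  | EVar _ => 1
  | ENum n => Z.of_nat n
  | ETrue | EFalse => 0
  | EUn _ e1 | EParen e1 => expr_weight e1
  | EBin _ e1 e2 => expr_weight e1 + expr_weight e2
  end.

Fixpoint expr_vars (e : expr) : list var :=
  match e with
  | EVar x => [x]
  | ENum _ | ETrue | EFalse => []
  | EUn _ e1 | EParen e1 => expr_vars e1
  | EBin _ e1 e2 => expr_vars e1 ++ expr_vars e2
  end.

Lemma expr_weight_nonneg e : 0 <= expr_weight e.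
Proof. induction e; cbn; lia. Qed.

Definition val_bounded (b : Z) (v : val) : Prop :=
  match v with VInt z => Z.abs z <= 2 ^ b | VBool _ => True end.

Definition store_bounded (P : var -> Prop) (b : Z) (S : store) : Prop :=
  forall x v, P x -> S x = Some v -> val_bounded b v.

Definition iint_vars (G : tenv) (x : var) : Prop := G x = Some TIint.

Lemma store_bounded_mono P b b' S :
  b <= b' -> store_bounded P b S -> store_bounded P b' S.
Proof.
  intros Hbb HS x [z|w] Hx Hv; cbn; [|trivial].
  specialize (HS x _ Hx Hv). cbn [val_bounded] in *.
  pose proof (Z.pow_le_mono_r 2 b b' ltac:(lia) Hbb). lia.
Qed.

Lemma store_bounded_weaken (P Q : var -> Prop) b S :
  (forall x, Q x -> P x) -> store_bounded P b S -> store_bounded Q b S.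
Proof. intros HQ HS x v Hx. apply HS, HQ, Hx. Qed.

Lemma store_bounded_upd (P Q : var -> Prop) b S x v :
  (forall y, Q y -> y <> x -> P y) -> store_bounded P b S -> val_bounded b v ->
  store_bounded Q b (upd S x v).
Proof.
  intros HQ HS Hv y w Hy. unfold upd.
  destruct (Nat.eqb_spec y x) as [->|Hyx].
  - now intros [= <-].
  - apply HS, HQ; assumption.
Qed.

Lemma eval_abs_le S b e z : 0 <= b ->
  store_bounded (fun x => In x (expr_vars e)) b S -> eval S e = Some (VInt z) ->
  Z.abs z <= expr_weight e * 2 ^ b.
Proof.
  intros Hb. pose proof (Z.pow_pos_nonneg 2 b ltac:(lia) Hb).
  revert z; induction e as [x|n| | |o e IH|o e1 IH1 e2 IH2|e IH];
    cbn [eval expr_weight expr_vars]; intros z HS Hz; try discriminate.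
  - specialize (HS x _ (or_introl eq_refl) Hz). cbn [val_bounded] in HS. lia.
  - injection Hz as <-. rewrite Z.abs_eq; nia.
  - destruct (eval S e) as [v|]; [|discriminate].
    destruct (unop_sem_abs_le _ _ _ Hz) as [a [-> Ha]].
    specialize (IH a HS eq_refl). lia.
  - destruct (eval S e1) as [v1|]; [|discriminate].
    destruct (eval S e2) as [v2|]; [|discriminate].
    destruct (binop_sem_abs_le _ _ _ _ Hz) as [a [c [-> [-> Hac]]]].
    specialize (IH1 a). specialize (IH2 c).
    assert (Z.abs a <= expr_weight e1 * 2 ^ b).
    { apply IH1; [|reflexivity]. eapply store_bounded_weaken; [|exact HS].
      intros; apply in_or_app; auto. }
    assert (Z.abs c <= expr_weight e2 * 2 ^ b).
    { apply IH2; [|reflexivity]. eapply store_bounded_weaken; [|exact HS].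
      intros; apply in_or_app; auto. }
    lia.
  - auto.
Qed.

Lemma eval_abs_le_pow2 S b e z : 0 <= b ->
  store_bounded (fun x => In x (expr_vars e)) b S -> eval S e = Some (VInt z) ->
  Z.abs z <= 2 ^ (b + expr_weight e).
Proof.
  intros Hb HS Hz. pose proof (eval_abs_le S b e z Hb HS Hz).
  pose proof (mul_pow2_le _ _ (expr_weight_nonneg e) Hb). lia.
Qed.

Lemma size_eval_bound S c e i : 0 <= c ->
  store_bounded (fun x => In x (expr_vars e)) c S ->
  eval S (EUn USize e) = Some (VInt i) -> 0 <= i <= c + expr_weight e + 1.
Proof.
  cbn [eval]. intros Hc HS Hi.
  destruct (eval S e) as [[z|]|] eqn:Hz; inversion Hi; subst.
  pose proof (eval_abs_le_pow2 S c e z Hc HS Hz).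
  pose proof (expr_weight_nonneg e). pose proof (sz_nonneg z).
  pose proof (sz_le_of_abs_le_pow2 z (c + expr_weight e)). lia.
Qed.

Lemma iint_expr_vars G l e t : has_type G l e t -> t = TIint ->
  forall x, In x (expr_vars e) -> iint_vars G x.
Proof.
  induction 1 as [x t Hx| | | |e _ IH|e t _ IH _|e _ IH|o e1 e2 _ _ _ _ _
                 |o e1 e2 t1 t2 _ _ _ _ _ _ _|o e1 e2 t1 t2 _ _ IH1 _ IH2 _ _|e t _ IH];
    intros Ht y Hy; subst; cbn [expr_vars In] in Hy; try discriminate; try contradiction; eauto.
  - destruct Hy as [<-|[]]. exact Hx.
  - destruct t1, t2; try discriminate.
    apply in_app_or in Hy as [Hy|Hy]; eauto.
Qed.

Scheme stmt_type_mut := Induction for stmt_type Sort Prop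
with seq_type_mut := Induction for seq_type Sort Prop.
Combined Scheme stmt_seq_type_ind from stmt_type_mut, seq_type_mut.

Scheme exec_mut := Induction for exec Sort Prop
with exec_seq_mut := Induction for exec_seq Sort Prop
with exec_loop_mut := Induction for exec_loop Sort Prop.
Combined Scheme exec_seq_loop_ind from exec_mut, exec_seq_mut, exec_loop_mut.

Lemma upd_neq {A} (m : var -> option A) x y a : y <> x -> upd m x a y = m y.
Proof. unfold upd. intros H. now destruct (Nat.eqb_spec y x). Qed.

Lemma stmt_type_extends :
  (forall G l s G', stmt_type G l s G' -> forall y t, G y = Some t -> G' y = Some t) /\
  (forall G l ss G', seq_type G l ss G' -> forall y t, G y = Some t -> G' y = Some t).
Proof.
  apply stmt_seq_type_ind; auto.
  intros G l t x Hx _ y u Hy. rewrite upd_neq; congruence.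
Qed.

Lemma loop_body_iint_vars :
  (forall G l s G', stmt_type G l s G' -> l = true ->
     forall y, iint_vars G' y -> iint_vars G y) /\
  (forall G l ss G', seq_type G l ss G' -> l = true ->
     forall y, iint_vars G' y -> iint_vars G y).
Proof.
  apply stmt_seq_type_ind; auto.
  intros G l t x _ Hnot -> y. unfold iint_vars, upd.
  destruct (Nat.eqb_spec y x); [|auto].
  intros [= ->]. exfalso; auto.
Qed.

(* Typing forbids declaring or assigning [iint] variables inside a loop. *)
Lemma loop_body_preserves_iint :
  (forall S s S', exec S s S' -> forall G G', stmt_type G true s G' ->
     forall y, iint_vars G y -> S' y = S y) /\
  (forall S ss S', exec_seq S ss S' -> forall G G', seq_type G true ss G' ->
     forall y, iint_vars G y -> S' y = S y) /\
  (forall x s j n S S', exec_loop x s j n S S' -> forall G G',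
     stmt_type (upd G x TIint) true s G' -> G x = None ->
     forall y, iint_vars G y -> S' y = S y).
Proof.
  apply exec_seq_loop_ind.
  - intros S t x G G' HT y Hy. inversion HT; subst. apply upd_neq. congruence.
  - intros S x e v _ _ G G' HT y Hy.
    inversion HT as [|? ? ? ? tx ? Hx Hnot| | |]; subst. apply upd_neq.
    intros ->. apply Hnot. unfold iint_vars in Hy. split; congruence.
  - intros S ss S' _ IH G G' HT. inversion HT; subst. eauto.
  - intros S e s1 s2 S' _ _ IH G G' HT. inversion HT; subst. eauto.
  - intros S e s1 s2 S' _ _ IH G G' HT. inversion HT; subst. eauto.
  - intros S x e s i S' _ _ IH G G' HT. inversion HT; subst. eauto.
  - auto.
  - intros S s ss S1 S2 _ IH _ IH2 G G' HT y Hy.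
    inversion HT as [|? ? ? ? G1 ? Hs Hss]; subst.
    rewrite (IH2 _ _ Hss y); [eauto|]. eapply (proj1 stmt_type_extends); eauto.
  - auto.
  - intros x s j n S S1 S2 _ _ IH _ IH2 G G' HT Hx y Hy.
    assert (y <> x) by (unfold iint_vars in Hy; congruence).
    rewrite (IH2 G G' HT Hx y Hy), (IH _ _ HT y) by (unfold iint_vars; rewrite upd_neq; auto).
    apply upd_neq; auto.
Qed.

Lemma store_bounded_decl b S x t : 0 <= b ->
  store_bounded (fun _ => True) b S ->
  store_bounded (fun _ => True) b (upd S x (if is_Int t then VInt 0 else VBool false)).
Proof.
  intros Hb HS. apply (store_bounded_upd (fun _ => True)); auto.
  destruct t; cbn [is_Int val_bounded Z.abs]; trivial; apply Z.pow_nonneg; lia.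
Qed.

Lemma store_bounded_assign b S x e v : 0 <= b -> eval S e = Some v ->
  store_bounded (fun _ => True) b S ->
  store_bounded (fun _ => True) (b + expr_weight e) (upd S x v).
Proof.
  intros Hb He HS. pose proof (expr_weight_nonneg e).
  apply (store_bounded_upd (fun _ => True)); auto.
  - eapply store_bounded_mono; [|exact HS]. lia.
  - destruct v as [z|]; cbn [val_bounded]; [|trivial].
    apply (eval_abs_le_pow2 S); [lia| |exact He].
    eapply store_bounded_weaken; [|exact HS]. now intros.
Qed.

Lemma loop_counter_bounded (G : tenv) S x c j :
  0 <= c -> Z.of_nat j <= c -> store_bounded (iint_vars G) c S ->
  store_bounded (iint_vars (upd G x TIint)) c (upd S x (VInt (Z.of_nat j))).
Proof.
  intros Hc Hj HS. apply (store_bounded_upd (iint_vars G)); auto.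
  - intros y Hy Hyx. unfold iint_vars in *. now rewrite upd_neq in Hy.
  - cbn [val_bounded]. pose proof (Z.pow_gt_lin_r 2 c ltac:(lia) Hc). lia.
Qed.

(* An inner loop runs at most [n = c + expr_weight e + 1] times and its
   counter stays below [2 ^ n], so its body runs with [iint] bound [n] once the
   log-bound has been raised by [n]. *)
Fixpoint loop_growth (s : stmt) (c : Z) : Z := Z.max 0 (match s with
  | SDecl _ _ => 0
  | SAssign _ e => expr_weight e
  | SBlock ss => fold_right (fun s' acc => loop_growth s' c + acc) 0 ss
  | SIf _ s1 s2 => loop_growth s1 c + loop_growth s2 c
  | SFor _ e s0 => let n := c + expr_weight e + 1 in n + n * loop_growth s0 n
  end).

Definition seq_loop_growth (ss : list stmt) (c : Z) : Z :=
  fold_right (fun s' acc => loop_growth s' c + acc) 0 ss.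

Lemma loop_growth_nonneg s c : 0 <= loop_growth s c.
Proof. destruct s; cbn [loop_growth]; lia. Qed.

Lemma seq_loop_growth_nonneg ss c : 0 <= seq_loop_growth ss c.
Proof.
  unfold seq_loop_growth. induction ss as [|s ss IH]; cbn [fold_right]; [lia|].
  pose proof (loop_growth_nonneg s c). lia.
Qed.

Lemma exec_loop_bound G G' x s c :
  stmt_type (upd G x TIint) true s G' -> G x = None ->
  (forall S S' b, exec S s S' -> 0 <= c <= b ->
     store_bounded (iint_vars (upd G x TIint)) c S -> store_bounded (fun _ => True) b S ->
     store_bounded (fun _ => True) (b + loop_growth s c) S') ->
  forall j n S S' b, exec_loop x s j n S S' -> 0 <= c <= b -> Z.of_nat n <= c ->
    store_bounded (iint_vars G) c S -> store_bounded (fun _ => True) b S ->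
    store_bounded (fun _ => True) (b + Z.of_nat (n - j) * loop_growth s c) S'.
Proof.
  intros Hs Hx Hbody j n S S' b Hloop. revert Hs Hx Hbody b.
  induction Hloop as [x s j n S Hnj|x s j n S S1 S2 Hjn Hexec _ IH];
    intros Hs Hx Hbody b Hc Hn HI HS.
  - replace (n - j)%nat with 0%nat by lia. now rewrite Z.add_0_r.
  - pose proof (loop_growth_nonneg s c).
    assert (HS1 : store_bounded (fun _ => True) (b + loop_growth s c) S1).
    { apply (Hbody _ _ _ Hexec Hc).
      - apply loop_counter_bounded; [lia|lia|exact HI].
      - apply (store_bounded_upd (fun _ => True)); auto. cbn [val_bounded].
        pose proof (Z.pow_gt_lin_r 2 b ltac:(lia) ltac:(lia)). lia. }
    assert (HI1 : store_bounded (iint_vars G) c S1).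
    { intros y v Hy. assert (y <> x) by (unfold iint_vars in Hy; congruence).
      rewrite (proj1 loop_body_preserves_iint _ _ _ Hexec _ _ Hs y)
        by (unfold iint_vars; rewrite upd_neq; auto).
      rewrite upd_neq by auto. apply HI, Hy. }
    specialize (IH Hs Hx Hbody (b + loop_growth s c) ltac:(lia) Hn HI1 HS1).
    replace (n - j)%nat with (Datatypes.S (n - Datatypes.S j)) by lia.
    rewrite Nat2Z.inj_succ. eapply store_bounded_mono; [|exact IH]. lia.
Qed.

Lemma exec_for_bound G G' x e s c b S S' :
  stmt_type (upd G x TIint) true s G' -> G x = None ->
  (forall S S' n b, exec S s S' -> 0 <= n <= b ->
     store_bounded (iint_vars (upd G x TIint)) n S -> store_bounded (fun _ => True) b S ->
     store_bounded (fun _ => True) (b + loop_growth s n) S') ->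
  exec S (SFor x e s) S' -> 0 <= c <= b ->
  store_bounded (fun y => In y (expr_vars e)) c S ->
  store_bounded (iint_vars G) c S -> store_bounded (fun _ => True) b S ->
  store_bounded (fun _ => True) (b + loop_growth (SFor x e s) c) S'.
Proof.
  intros Hs Hx Hbody Hexec Hc He HI HS.
  inversion Hexec as [| | | | |? ? ? ? i ? Hi Hloop]; subst.
  pose proof (expr_weight_nonneg e).
  remember (c + expr_weight e + 1) as n eqn:Hn.
  assert (Hin : 0 <= i <= n) by (subst n; exact (size_eval_bound S c e i ltac:(lia) He Hi)).
  pose proof (exec_loop_bound G G' x s n Hs Hx (fun S1 S2 => Hbody S1 S2 n)
                _ _ _ _ (b + n) Hloop) as Hiter.
  rewrite Nat.sub_0_r, Z2Nat.id in Hiter by lia.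
  eapply store_bounded_mono; [|apply Hiter].
  - pose proof (loop_growth_nonneg s n). cbn [loop_growth]. rewrite <- Hn.
    assert (i * loop_growth s n <= n * loop_growth s n) by (apply Z.mul_le_mono_nonneg_r; lia).
    lia.
  - lia.
  - lia.
  - eapply store_bounded_mono; [|exact HI]. lia.
  - eapply store_bounded_mono; [|exact HS]. lia.
Qed.

Lemma loop_body_bound :
  (forall G l s G', stmt_type G l s G' -> l = true ->
     forall S S' c b, exec S s S' -> 0 <= c <= b ->
     store_bounded (iint_vars G) c S -> store_bounded (fun _ => True) b S ->
     store_bounded (fun _ => True) (b + loop_growth s c) S') /\
  (forall G l ss G', seq_type G l ss G' -> l = true ->
     forall S S' c b, exec_seq S ss S' -> 0 <= c <= b ->
     store_bounded (iint_vars G) c S -> store_bounded (fun _ => True) b S ->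
     store_bounded (fun _ => True) (b + seq_loop_growth ss c) S').
Proof.
  apply stmt_seq_type_ind.
  - intros G l t x _ _ _ S S' c b Hexec Hc _ HS. inversion Hexec; subst.
    apply store_bounded_decl; [|eapply store_bounded_mono; [|exact HS]];
      pose proof (loop_growth_nonneg (SDecl t x) c); lia.
  - intros G l x e tx te _ _ _ _ _ S S' c b Hexec Hc _ HS.
    inversion Hexec as [|? ? ? v _ He| | | |]; subst.
    eapply store_bounded_mono; [|apply (store_bounded_assign b S x e v); auto; lia].
    cbn [loop_growth]. lia.
  - intros G l ss G' _ IH -> S S' c b Hexec Hc HI HS. inversion Hexec; subst.
    eapply store_bounded_mono; [|eapply IH; eauto].
    pose proof (seq_loop_growth_nonneg ss c). cbn [loop_growth].
    fold (seq_loop_growth ss c). lia.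
  - intros G l e s1 s2 G1 G2 _ _ IH1 _ IH2 -> S S' c b Hexec Hc HI HS.
    pose proof (loop_growth_nonneg s1 c). pose proof (loop_growth_nonneg s2 c).
    inversion Hexec; subst; (eapply store_bounded_mono; [|eauto]); cbn [loop_growth]; lia.
  - intros G l x e s G' He Hx Hs IH -> S S' c b Hexec Hc HI HS.
    apply (exec_for_bound G G' x e s c b S S' Hs Hx (IH eq_refl) Hexec Hc); auto.
    inversion He; subst. eapply store_bounded_weaken; [|exact HI].
    eapply iint_expr_vars; eauto.
  - intros G l _ S S' c b Hexec _ _ HS. inversion Hexec; subst.
    cbn. now rewrite Z.add_0_r.
  - intros G l s ss G1 G2 Hs IH _ IH2 -> S S' c b Hexec Hc HI HS.
    inversion Hexec as [|? ? ? S1 ? Hexec1 Hexec2]; subst.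
    pose proof (loop_growth_nonneg s c).
    assert (HI1 : store_bounded (iint_vars G1) c S1).
    { intros y v Hy. pose proof (proj1 loop_body_iint_vars _ _ _ _ Hs eq_refl y Hy).
      rewrite (proj1 loop_body_preserves_iint _ _ _ Hexec1 _ _ Hs y) by assumption.
      now apply HI. }
    assert (HS1 : store_bounded (fun _ => True) (b + loop_growth s c) S1) by (eapply IH; eauto).
    specialize (IH2 eq_refl S1 S' c (b + loop_growth s c) Hexec2 ltac:(lia) HI1 HS1).
    eapply store_bounded_mono; [|exact IH2].
    cbn [seq_loop_growth fold_right]. fold (seq_loop_growth ss c). lia.
Qed.

(* Outside loops [iint] variables may be assigned arbitrary integers, so a
   single log-bound [b] is tracked for all variables. *)
Fixpoint stmt_bound (s : stmt) (b : Z) : Z := Z.max b (match s with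
  | SDecl _ _ => b
  | SAssign _ e => b + expr_weight e
  | SBlock ss => fold_left (fun acc s' => stmt_bound s' acc) ss b
  | SIf _ s1 s2 => Z.max (stmt_bound s1 b) (stmt_bound s2 b)
  | SFor _ _ _ => b + loop_growth s b
  end).

Definition seq_bound (ss : list stmt) (b : Z) : Z :=
  fold_left (fun acc s' => stmt_bound s' acc) ss b.

Lemma stmt_bound_ge s b : b <= stmt_bound s b.
Proof. destruct s; cbn [stmt_bound]; lia. Qed.

Lemma seq_bound_ge ss b : b <= seq_bound ss b.
Proof.
  unfold seq_bound. revert b; induction ss as [|s ss IH]; intros b; cbn [fold_left]; [lia|].
  specialize (IH (stmt_bound s b)). pose proof (stmt_bound_ge s b). lia.
Qed.

Lemma exec_bound :
  (forall G l s G', stmt_type G l s G' -> forall S S' b, exec S s S' -> 0 <= b ->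
     store_bounded (fun _ => True) b S ->
     store_bounded (fun _ => True) (stmt_bound s b) S') /\
  (forall G l ss G', seq_type G l ss G' -> forall S S' b, exec_seq S ss S' -> 0 <= b ->
     store_bounded (fun _ => True) b S ->
     store_bounded (fun _ => True) (seq_bound ss b) S').
Proof.
  apply stmt_seq_type_ind.
  - intros G l t x _ _ S S' b Hexec Hb HS. inversion Hexec; subst.
    eapply store_bounded_mono; [apply stmt_bound_ge|]. now apply store_bounded_decl.
  - intros G l x e tx te _ _ _ _ S S' b Hexec Hb HS.
    inversion Hexec as [|? ? ? v _ He| | | |]; subst.
    eapply store_bounded_mono; [|apply (store_bounded_assign b S x e v); auto].
    cbn [stmt_bound]. lia.
  - intros G l ss G' _ IH S S' b Hexec Hb HS. inversion Hexec; subst.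
    eapply store_bounded_mono; [|eapply IH; eauto].
    cbn [stmt_bound]. fold (seq_bound ss b). lia.
  - intros G l e s1 s2 G1 G2 _ _ IH1 _ IH2 S S' b Hexec Hb HS.
    inversion Hexec; subst; (eapply store_bounded_mono; [|eauto]); cbn [stmt_bound]; lia.
  - intros G l x e s G' _ Hx Hs _ S S' b Hexec Hb HS.
    eapply store_bounded_mono; [|apply (exec_for_bound G G' x e s b b S S' Hs Hx)]; auto.
    + cbn [stmt_bound]. lia.
    + intros S1 S2 n b' Hexec1. eapply (proj1 loop_body_bound); eauto.
    + lia.
    + eapply store_bounded_weaken; [|exact HS]. now intros.
    + eapply store_bounded_weaken; [|exact HS]. now intros.
  - intros G l S S' b Hexec _ HS. now inversion Hexec; subst.
  - intros G l s ss G1 G2 _ IH _ IH2 S S' b Hexec Hb HS.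
    inversion Hexec as [|? ? ? S1 ? Hexec1 Hexec2]; subst.
    apply (IH2 S1); auto.
    + pose proof (stmt_bound_ge s b). lia.
    + eapply IH; eauto.
Qed.

Definition poly_bounded (f : Z -> Z) : Prop :=
  exists a k, 0 <= a /\ 0 <= k /\ forall x, 0 <= x -> f x <= a * (x + 1) ^ k.

Lemma one_le_pow_succ x k : 0 <= x -> 0 <= k -> 1 <= (x + 1) ^ k.
Proof. intros Hx Hk. rewrite <- (Z.pow_0_r (x + 1)). apply Z.pow_le_mono_r; lia. Qed.

Lemma pow_succ_mono x k k' : 0 <= x -> 0 <= k <= k' -> (x + 1) ^ k <= (x + 1) ^ k'.
Proof. intros Hx Hk. apply Z.pow_le_mono_r; lia. Qed.

Lemma poly_bounded_const c : poly_bounded (fun _ => c).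
Proof. exists (Z.max 0 c), 0. repeat split; intros; rewrite ?Z.pow_0_r; lia. Qed.

Lemma poly_bounded_id : poly_bounded (fun x => x).
Proof. exists 1, 1. repeat split; intros; rewrite ?Z.pow_1_r; lia. Qed.

Lemma poly_bounded_add f h :
  poly_bounded f -> poly_bounded h -> poly_bounded (fun x => f x + h x).
Proof.
  intros [a1 [k1 [Ha1 [Hk1 Hf]]]] [a2 [k2 [Ha2 [Hk2 Hh]]]].
  exists (a1 + a2), (Z.max k1 k2). repeat split; try lia.
  intros x Hx. specialize (Hf x Hx). specialize (Hh x Hx).
  pose proof (pow_succ_mono x k1 (Z.max k1 k2) Hx ltac:(lia)).
  pose proof (pow_succ_mono x k2 (Z.max k1 k2) Hx ltac:(lia)). nia.
Qed.

Lemma poly_bounded_max f h :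
  poly_bounded f -> poly_bounded h -> poly_bounded (fun x => Z.max (f x) (h x)).
Proof.
  intros [a1 [k1 [Ha1 [Hk1 Hf]]]] [a2 [k2 [Ha2 [Hk2 Hh]]]].
  exists (a1 + a2), (Z.max k1 k2). repeat split; try lia.
  intros x Hx. specialize (Hf x Hx). specialize (Hh x Hx).
  pose proof (pow_succ_mono x k1 (Z.max k1 k2) Hx ltac:(lia)).
  pose proof (pow_succ_mono x k2 (Z.max k1 k2) Hx ltac:(lia)).
  pose proof (one_le_pow_succ x k1 Hx Hk1). pose proof (one_le_pow_succ x k2 Hx Hk2).
  nia.
Qed.

Lemma poly_bounded_mul f h :
  (forall x, 0 <= x -> 0 <= f x) -> (forall x, 0 <= x -> 0 <= h x) ->
  poly_bounded f -> poly_bounded h -> poly_bounded (fun x => f x * h x).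
Proof.
  intros Hf0 Hh0 [a1 [k1 [Ha1 [Hk1 Hf]]]] [a2 [k2 [Ha2 [Hk2 Hh]]]].
  exists (a1 * a2), (k1 + k2). repeat split; try nia.
  intros x Hx. rewrite Z.pow_add_r by lia.
  pose proof (Z.mul_le_mono_nonneg _ _ _ _ (Hf0 x Hx) (Hf x Hx) (Hh0 x Hx) (Hh x Hx)).
  lia.
Qed.

Lemma poly_bounded_comp f h :
  (forall x, 0 <= x -> 0 <= h x) ->
  poly_bounded f -> poly_bounded h -> poly_bounded (fun x => f (h x)).
Proof.
  intros Hh0 [a1 [k1 [Ha1 [Hk1 Hf]]]] [a2 [k2 [Ha2 [Hk2 Hh]]]].
  exists (a1 * (a2 + 1) ^ k1), (k2 * k1). repeat split.
  - apply Z.mul_nonneg_nonneg, Z.pow_nonneg; lia.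
  - nia.
  - intros x Hx. specialize (Hh0 x Hx). specialize (Hf _ Hh0). specialize (Hh x Hx).
    pose proof (one_le_pow_succ x k2 Hx Hk2).
    assert ((h x + 1) ^ k1 <= ((a2 + 1) * (x + 1) ^ k2) ^ k1)
      by (apply Z.pow_le_mono_l; nia).
    rewrite Z.pow_mul_l, <- Z.pow_mul_r in H0 by lia.
    pose proof (Z.mul_le_mono_nonneg_l _ _ a1 Ha1 H0). lia.
Qed.

Lemma stmt_nested_ind (P : stmt -> Prop) :
  (forall t x, P (SDecl t x)) ->
  (forall x e, P (SAssign x e)) ->
  (forall ss, Forall P ss -> P (SBlock ss)) ->
  (forall e s1 s2, P s1 -> P s2 -> P (SIf e s1 s2)) ->
  (forall x e s, P s -> P (SFor x e s)) ->
  forall s, P s.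
Proof.
  intros HD HA HB HI HF. fix IH 1. intros [t x|x e|ss|e s1 s2|x e s].
  - apply HD.
  - apply HA.
  - apply HB. induction ss as [|s ss IHss]; constructor; auto.
  - apply HI; apply IH.
  - apply HF; apply IH.
Qed.

Lemma seq_loop_growth_poly_bounded ss :
  Forall (fun s => poly_bounded (loop_growth s)) ss -> poly_bounded (seq_loop_growth ss).
Proof.
  induction 1 as [|s ss Hs _ IH].
  - apply poly_bounded_const.
  - exact (poly_bounded_add _ _ Hs IH).
Qed.

Lemma seq_bound_poly_bounded ss :
  Forall (fun s => poly_bounded (stmt_bound s)) ss -> poly_bounded (seq_bound ss).
Proof.
  induction 1 as [|s ss Hs _ IH].
  - apply poly_bounded_id.
  - apply (poly_bounded_comp (seq_bound ss) (stmt_bound s)); auto.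
    intros x Hx. pose proof (stmt_bound_ge s x). lia.
Qed.

Lemma stmt_poly_bounded s :
  poly_bounded (loop_growth s) /\ poly_bounded (stmt_bound s).
Proof.
  induction s as [t x|x e|ss Hss|e s1 s2 [Hg1 Hb1] [Hg2 Hb2]|x e s [Hg Hb]]
    using stmt_nested_ind.
  - split; cbn [loop_growth stmt_bound].
    + apply poly_bounded_const.
    + apply poly_bounded_max; apply poly_bounded_id.
  - split; cbn [loop_growth stmt_bound].
    + apply poly_bounded_const.
    + apply poly_bounded_max; [apply poly_bounded_id|].
      apply poly_bounded_add; [apply poly_bounded_id|apply poly_bounded_const].
  - split; cbn [loop_growth stmt_bound].
    + apply poly_bounded_max; [apply poly_bounded_const|].
      apply seq_loop_growth_poly_bounded. eapply Forall_impl; [|exact Hss]. cbn; tauto.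
    + apply poly_bounded_max; [apply poly_bounded_id|].
      apply seq_bound_poly_bounded. eapply Forall_impl; [|exact Hss]. cbn; tauto.
  - split; cbn [loop_growth stmt_bound].
    + apply poly_bounded_max; [apply poly_bounded_const|]. now apply poly_bounded_add.
    + apply poly_bounded_max; [apply poly_bounded_id|]. now apply poly_bounded_max.
  - pose proof (expr_weight_nonneg e).
    assert (Hn : poly_bounded (fun c => c + expr_weight e + 1)).
    { apply poly_bounded_add; [|apply poly_bounded_const].
      apply poly_bounded_add; [apply poly_bounded_id|apply poly_bounded_const]. }
    assert (Hgf : poly_bounded (loop_growth (SFor x e s))).
    { cbn [loop_growth]. apply poly_bounded_max; [apply poly_bounded_const|].
      apply poly_bounded_add; [exact Hn|].
      apply poly_bounded_mul; [lia|intros; apply loop_growth_nonneg|exact Hn|].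
      apply (poly_bounded_comp (loop_growth s)); [lia|exact Hg|exact Hn]. }
    split; [exact Hgf|]. cbn [stmt_bound].
    apply poly_bounded_max; [apply poly_bounded_id|].
    apply poly_bounded_add; [apply poly_bounded_id|exact Hgf].
Qed.

Lemma peval_repeat m n x : peval (repeat m n) x = m * peval (repeat 1 n) x.
Proof.
  unfold peval. induction n as [|n IH]; cbn [repeat fold_right]; [ring|].
  rewrite IH. ring.
Qed.

Lemma peval_ones_nonneg n x : 0 <= x -> 0 <= peval (repeat 1 n) x.
Proof. intros Hx. unfold peval. induction n as [|n IH]; cbn [repeat fold_right]; nia. Qed.

Lemma peval_ones_mono n x : 0 <= x -> peval (repeat 1 n) x <= peval (repeat 1 (S n)) x.
Proof.
  intros Hx. unfold peval. induction n as [|n IH]; cbn [repeat fold_right] in *; [lia|].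
  apply Z.add_le_mono_l, Z.mul_le_mono_nonneg_l; assumption.
Qed.

Lemma pow_succ_le_peval_ones n x : 0 <= x ->
  (x + 1) ^ Z.of_nat n <= 2 ^ Z.of_nat n * peval (repeat 1 (S n)) x.
Proof.
  intros Hx. induction n as [|n IH].
  { cbn [Z.of_nat]. rewrite !Z.pow_0_r. unfold peval. cbn [repeat fold_right]. lia. }
  rewrite Nat2Z.inj_succ, !Z.pow_succ_r by lia.
  pose proof (peval_ones_nonneg (S n) x Hx).
  pose proof (peval_ones_mono (S n) x Hx).
  pose proof (Z.pow_nonneg 2 (Z.of_nat n) ltac:(lia)).
  change (peval (repeat 1 (S (S n))) x) with (1 + x * peval (repeat 1 (S n)) x) in *.
  nia.
Qed.

Lemma poly_bounded_peval f : poly_bounded f ->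
  exists q, forall x, 0 <= x -> f x <= peval q x.
Proof.
  intros [a [k [Ha [Hk Hf]]]]. exists (repeat (a * 2 ^ k) (S (Z.to_nat k))).
  intros x Hx. rewrite peval_repeat.
  pose proof (pow_succ_le_peval_ones (Z.to_nat k) x Hx) as Hpow.
  rewrite Z2Nat.id in Hpow by lia.
  specialize (Hf x Hx). nia.
Qed.

Lemma init_store_bounded xs vs :
  store_bounded (fun _ => True) (sz_tuple vs) (init_store xs vs).
Proof.
  revert vs; induction xs as [|x xs IH]; intros [|v vs]; cbn [init_store];
    try (intros ? ? _ Hx; discriminate Hx).
  change (sz_tuple (v :: vs)) with (sz v + sz_tuple vs).
  pose proof (sz_nonneg v). pose proof (sz_tuple_nonneg vs).
  apply (store_bounded_upd (fun _ => True)); auto.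
  - eapply store_bounded_mono; [|apply IH]. lia.
  - cbn [val_bounded]. pose proof (abs_le_pow2_sz v).
    pose proof (Z.pow_le_mono_r 2 (sz v) (sz v + sz_tuple vs) ltac:(lia) ltac:(lia)). lia.
Qed.

Theorem proposition2 :
  forall p : program, well_typed p ->
  exists q : list Z, forall (vs : list Z) (z : Z),
    runs p vs z -> sz z <= peval q (sz_tuple vs).
Proof.
  intros p [G' [t [Hbody _]]].
  assert (Hpoly : poly_bounded (fun x => seq_bound (body p) x + expr_weight (ret p) + 1)).
  { apply poly_bounded_add; [apply poly_bounded_add|]; try apply poly_bounded_const.
    apply seq_bound_poly_bounded, Forall_forall. intros s _. apply stmt_poly_bounded. }
  destruct (poly_bounded_peval _ Hpoly) as [q Hq]. exists q.
  intros vs z [_ [S' [Hexec Hret]]].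
  set (b := seq_bound (body p) (sz_tuple vs)).
  assert (Hb : sz_tuple vs <= b) by apply seq_bound_ge.
  pose proof (sz_tuple_nonneg vs) as Hvs.
  pose proof (expr_weight_nonneg (ret p)) as Hw.
  assert (HS' : store_bounded (fun _ => True) b S').
  { eapply (proj2 exec_bound); eauto using init_store_bounded. }
  assert (Hz : Z.abs z <= 2 ^ (b + expr_weight (ret p))).
  { apply (eval_abs_le_pow2 S'); [lia| |exact Hret].
    eapply store_bounded_weaken; [|exact HS']. now intros. }
  apply sz_le_of_abs_le_pow2 in Hz; [|lia].
  specialize (Hq _ Hvs). cbn beta in Hq. fold b in Hq. lia.
Qed.
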